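(* Let $\mathcal G=(I,O,\lambda)$ be a synchronous game and let $p(a,b|v,w)=\langle h_{v,a},k_{w,b}\rangle$ be a perfect vect-strategy for $\mathcal G$, with vectors $h_{v,a},k_{w,b}$ as in the definition of a vector correlation. Then $h_{v,a}=k_{v,a}$ for all $v\in I$, $a\in O$.
   Context: A synchronous game $\mathcal G=(I,O,\lambda)$ consists of finite sets $I,O$ and $\lambda:I\times I\times O\times O\to\{0,1\}$ with $\lambda(v,v,a,b)=1$ if $a=b$ and $0$ if $a\ne b$. A strategy $p(a,b|v,w)$ is perfect if $\lambda(v,w,a,b)=0\Rightarrow p(a,b|v,w)=0$. A vector correlation (vect-strategy) is one of the form $p(a,b|v,w)=\langle h_{v,a},k_{w,b}\rangle$ where $h_{v,a},k_{w,b}$ ($v,w\in I$, $a,b\in O$) are vectors in a Hilbert space such that for each $v$ the vectors $\{h_{v,a}\}_{a\in O}$ are mutually orthogonal and the vectors $\{k_{v,b}\}_{b\in O}$ are mutually orthogonal, there is a unit vector $\eta$ with $\sum_ah_{v,a}=\eta=\sum_bk_{w,b}$ for all $v,w$, and $\langle h_{v,a},k_{w,b}\rangle\ge0$ for all $v,w,a,b$. *)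

From mathcomp Require Import all_boot all_order all_algebra.
From mathcomp Require Import complex.
From mathcomp Require Import reals.
Set Implicit Arguments. Unset Strict Implicit. Unset Printing Implicit Defensive.
Import Order.TTheory GRing.Theory Num.Theory.
Local Open Scope ring_scope.

Definition is_inner_product (C : numClosedFieldType) (V : lmodType C)
  (ip : V -> V -> C) : Prop :=
  [/\ (forall (c : C) (x y z : V), ip (c *: x + y) z = c * ip x z + ip y z),
      (forall x y : V, ip x y = (ip y x)^*),
      (forall x : V, 0 <= ip x x)
    & (forall x : V, ip x x = 0 -> x = 0)].

Definition synchronous (I O : finType) (lambda : I -> I -> O -> O -> bool) : Prop :=
  forall (v : I) (a b : O), lambda v v a b = (a == b).

Definition vect_correlation (C : numClosedFieldType) (V : lmodType C)
  (ip : V -> V -> C) (I O : finType) (h k : I -> O -> V) : Prop :=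
  [/\ (forall (v : I) (a b : O), a != b -> ip (h v a) (h v b) = 0),
      (forall (v : I) (a b : O), a != b -> ip (k v a) (k v b) = 0),
      (exists eta : V, ip eta eta = 1 /\
         forall v : I, \sum_(a : O) h v a = eta /\ \sum_(b : O) k v b = eta)
    & (forall (v w : I) (a b : O), 0 <= ip (h v a) (k w b))].

Definition perfect_vect (C : numClosedFieldType) (V : lmodType C)
  (ip : V -> V -> C) (I O : finType) (lambda : I -> I -> O -> O -> bool)
  (h k : I -> O -> V) : Prop :=
  forall (v w : I) (a b : O), lambda v w a b = false -> ip (h v a) (k w b) = 0.

From mathcomp Require Import all_boot all_order all_algebra.
From mathcomp Require Import complex.
From mathcomp Require Import reals.
Import Order.TTheory GRing.Theory Num.Theory.
Local Open Scope ring_scope.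

(* Write x = h_{v,a}, y = k_{v,a} and let eta be the common sum of each family.
   Pairing eta with x, orthogonality within the h-family gives <eta, x> = <x, x>,
   while perfection at the diagonal question (v, v), where only the answer
   pair (a, a) is allowed, gives <eta, x> = <y, x>.  Symmetrically
   <eta, y> = <x, y> = <y, y>.  Hence x - y is orthogonal to both x and y,
   so it has norm zero. *)

Section InnerProduct.

Context {C : numClosedFieldType} {V : lmodType C} {ip : V -> V -> C}.
Hypothesis ipP : is_inner_product ip.

Lemma ipDl (z x y : V) : ip (x + y) z = ip x z + ip y z.
Proof. by case: ipP => lin _ _ _; have := lin 1 x y z; rewrite scale1r mul1r. Qed.

Lemma ip0l (z : V) : ip 0 z = 0.
Proof. by apply: (addIr (ip 0 z)); rewrite -ipDl !add0r. Qed.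

Lemma ipBl (z x y : V) : ip (x - y) z = ip x z - ip y z.
Proof.
case: ipP => lin _ _ _.
by rewrite ipDl -scaleN1r -[_ *: y]addr0 lin ip0l addr0 mulN1r.
Qed.

Lemma ip_suml (J : finType) (f : J -> V) (z : V) :
  ip (\sum_j f j) z = \sum_j ip (f j) z.
Proof. exact: (big_morph (ip^~ z) (ipDl z) (ip0l z)). Qed.

Lemma ip_sum_single {J : finType} {f : J -> V} (j : J) {z : V} :
  (forall i, i != j -> ip (f i) z = 0) -> ip (\sum_i f i) z = ip (f j) z.
Proof.
by move=> f_orth; rewrite ip_suml (bigD1 j) //= big1 ?addr0.
Qed.

Lemma ip_sym_eq0 {x y : V} : ip x y = 0 -> ip y x = 0.
Proof. by case: ipP => _ csym _ _ xy0; rewrite csym xy0 conjC0. Qed.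

Lemma ip_eq_vec {x y : V} : ip x x = ip y x -> ip x y = ip y y -> x = y.
Proof.
case: ipP => _ csym _ def xx_yx xy_yy.
have dx : ip (x - y) x = 0 by rewrite ipBl xx_yx subrr.
have dy : ip (x - y) y = 0 by rewrite ipBl xy_yy subrr.
apply/subr0_eq/def.
by rewrite ipBl (ip_sym_eq0 dx) (ip_sym_eq0 dy) subrr.
Qed.

End InnerProduct.

Section SynchronousPerfectStrategy.

Context {C : numClosedFieldType} {V : lmodType C} {ip : V -> V -> C}.
Context {I O : finType} {lambda : I -> I -> O -> O -> bool} {h k : I -> O -> V}.
Hypotheses (ipP : is_inner_product ip) (sync : synchronous lambda).
Hypotheses (hk : vect_correlation ip h k) (perf : perfect_vect ip lambda h k).

Lemma perfect_sync_orth (v : I) (a b : O) : a != b -> ip (h v a) (k v b) = 0.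
Proof. by move=> ab; apply: perf; rewrite sync (negbTE ab). Qed.

Lemma perfect_sync_vect_eq (v : I) (a : O) : h v a = k v a.
Proof.
case: hk => h_orth k_orth [eta [_ /(_ v)[sum_h sum_k]]] _.
have eta_hh : ip eta (h v a) = ip (h v a) (h v a).
  by rewrite -sum_h (ip_sum_single ipP a) // => b; apply: h_orth.
have eta_kh : ip eta (h v a) = ip (k v a) (h v a).
  rewrite -sum_k (ip_sum_single ipP a) // => b ba.
  by apply: (ip_sym_eq0 ipP); apply: perfect_sync_orth; rewrite eq_sym.
have eta_hk : ip eta (k v a) = ip (h v a) (k v a).
  by rewrite -sum_h (ip_sum_single ipP a) // => b; apply: perfect_sync_orth.
have eta_kk : ip eta (k v a) = ip (k v a) (k v a).
  by rewrite -sum_k (ip_sum_single ipP a) // => b; apply: k_orth.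
apply: (ip_eq_vec ipP).
- by rewrite -eta_hh eta_kh.
- by rewrite -eta_hk eta_kk.
Qed.

End SynchronousPerfectStrategy.

Theorem mainTheorem9 (R : realType) (V : lmodType R[i]) (ip : V -> V -> R[i])
  (I O : finType) (lambda : I -> I -> O -> O -> bool) (h k : I -> O -> V) :
  is_inner_product ip ->
  synchronous lambda ->
  vect_correlation ip h k ->
  perfect_vect ip lambda h k ->
  forall (v : I) (a : O), h v a = k v a.
Proof. exact: perfect_sync_vect_eq. Qed.
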